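(* For all integers $n,m,k\ge 0$, the number of Dyck paths of semilength $n$ with $m$ contacts and $k$ up-steps at odd height equals the number of Dyck paths of semilength $n$ with $m$ contacts and $k$ peaks.
   Context: Paths have steps $(1,1)$ (up-steps) and $(1,-1)$ (down-steps) and start at $(0,0)$. A Dyck path ends on the line $y=0$ and has no vertex with negative $y$-coordinate. The semilength is half the number of steps. An up-step is at height $j$ if it goes from $(i-1,j-1)$ to $(i,j)$; a down-step is at height $j$ if it goes from $(i,j)$ to $(i+1,j-1)$; it is at odd height if $j$ is odd. A peak is an up-step immediately followed by a down-step. A contact is a down-step at height $1$ or an up-step at height $0$. *)

From mathcomp Require Import all_boot all_order all_algebra.
Import GRing.Theory Num.Theory.
Set Implicit Arguments. Unset Strict Implicit. Unset Printing Implicit Defensive.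

(* A path is a sequence of steps: true = up-step (1,1), false = down-step (1,-1). *)

Definition endheight (s : seq bool) : int :=
  foldr (fun b h => if b then (h + 1)%R else (h - 1)%R) 0%R s.

Definition hbefore (s : seq bool) (i : nat) : int := endheight (take i s).

Definition dyck (n : nat) (s : seq bool) : bool :=
  [&& size s == 2 * n,
      endheight s == 0%R &
      all (fun i => (0 <= hbefore s i)%R) (iota 0 (size s).+1)].

(* height of step i: an up-step from y = j-1 to j has height j;
   a down-step from y = j to j-1 has height j *)
Definition stepheight (s : seq bool) (i : nat) : int :=
  if nth false s i then (hbefore s i + 1)%R else hbefore s i.

Definition odd_ups (s : seq bool) : nat :=
  count (fun i => nth false s i && odd `|stepheight s i|%N) (iota 0 (size s)).

Definition peaks (s : seq bool) : nat :=
  count (fun i => nth false s i && ~~ nth true s i.+1) (iota 0 (size s)).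

Definition contacts (s : seq bool) : nat :=
  count (fun i => if nth false s i then stepheight s i == 0%R
                  else stepheight s i == 1%R) (iota 0 (size s)).

Definition dyck_paths (n : nat) : seq (seq bool) :=
  [seq val t | t in [pred t : (2 * n).-tuple bool | dyck n (val t)]].

From mathcomp Require Import all_boot all_order all_algebra zify.
Import GRing.Theory Num.Theory.
Set Implicit Arguments. Unset Strict Implicit. Unset Printing Implicit Defensive.

(* Every Dyck path of positive semilength factors uniquely as U a D c with
   a and c Dyck paths.  As the parity of the height of a step is that of its
   position, this factorisation gives
     contacts (U a D c) = 1 + contacts c,
     odd_ups (U a D c) = 1 + even_ups a + odd_ups c,
     peaks (U a D c) = [a = nil] + peaks a + peaks c,
   where even_ups counts the up-steps at even height.  Exchanging a and c
   shows that 1 + even_ups and odd_ups are equidistributed on nonempty Dyck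
   paths.  By induction on the semilength odd_ups and peaks are
   equidistributed, hence so are 1 + even_ups a and [a = nil] + peaks a, and
   then the joint distributions of (contacts, odd_ups) and (contacts, peaks)
   agree. *)

Lemma all_iota0S (P : pred nat) n :
  all P (iota 0 n.+1) = P 0 && all (fun i => P i.+1) (iota 0 n).
Proof. by rewrite /= -[iota 1 _]/(iota (1 + 0) _) iotaDl all_map. Qed.

Lemma uniq_flatten_map (S T : eqType) (f : S -> seq T) l :
  uniq l -> {in l, forall i, uniq (f i)} ->
  {in l &, forall i j x, x \in f i -> x \in f j -> i = j} ->
  uniq (flatten (map f l)).
Proof.
elim: l => [|i l IH] //= /andP[i_l uniq_l] uniq_f disj_f.
rewrite cat_uniq uniq_f ?mem_head // IH //; last 2 first.
- by move=> j j_l; apply: uniq_f; rewrite inE j_l orbT.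
- by move=> j k j_l k_l; apply: disj_f; rewrite inE ?j_l ?k_l orbT.
rewrite andbT; apply/hasP => -[x /flatten_mapP[j j_l x_j] x_i].
by move: i_l; rewrite (disj_f i j (mem_head _ _) _ x x_i x_j) ?j_l // inE j_l orbT.
Qed.

Lemma perm_flatten_map (S T : eqType) (f g : S -> seq T) l :
  {in l, forall i, perm_eq (f i) (g i)} ->
  perm_eq (flatten (map f l)) (flatten (map g l)).
Proof.
elim: l => [|i l IH] //= perm_fg.
rewrite perm_cat ?perm_fg ?mem_head // IH // => j j_l.
by apply: perm_fg; rewrite inE j_l orbT.
Qed.

Lemma perm_iota_subn n : perm_eq [seq n - i | i <- iota 0 n.+1] (iota 0 n.+1).
Proof.
apply: uniq_perm; last 1 first.
- move=> j; apply/mapP/idP => [[i] | j_le]; first by rewrite !mem_iota => _ ->; lia.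
  by exists (n - j); move: j_le; rewrite !mem_iota; lia.
- by rewrite map_inj_in_uniq ?iota_uniq // => i j; rewrite !mem_iota; lia.
- exact: iota_uniq.
Qed.

Lemma perm_flatten_map_subn (T : eqType) (f g : nat -> seq T) n :
  (forall i, i <= n -> perm_eq (f i) (g (n - i))) ->
  perm_eq (flatten (map f (iota 0 n.+1))) (flatten (map g (iota 0 n.+1))).
Proof.
move=> perm_fg; apply: perm_trans (perm_flatten_map (g := g \o subn n) _) _.
  by move=> i; rewrite mem_iota => /andP[_ lt_in]; apply: perm_fg.
by rewrite map_comp; apply/perm_flatten/perm_map/perm_iota_subn.
Qed.

Lemma perm_allpairsC (S T R : eqType) (f : S -> T -> R) s t :
  perm_eq [seq f x y | x <- s, y <- t] [seq f x y | y <- t, x <- s].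
Proof.
elim: s => [|x s IH] /=; first by elim: t.
rewrite perm_sym (perm_allpairs_consr (fun y x => f x y) t (fun _ => x) (fun _ => s)).
by rewrite perm_cat2l perm_sym.
Qed.

Lemma perm_allpairs_map (S T U V R : eqType) (h : U -> V -> R)
    (f1 f2 : S -> U) (g1 g2 : T -> V) s t :
  perm_eq (map f1 s) (map f2 s) -> perm_eq (map g1 t) (map g2 t) ->
  perm_eq [seq h (f1 x) (g1 y) | x <- s, y <- t] [seq h (f2 x) (g2 y) | x <- s, y <- t].
Proof.
have allpairs_map f g : [seq h (f x) (g y) | x <- s, y <- t] =
                        [seq h u v | u <- map f s, v <- map g t].
  by rewrite allpairs_mapl allpairs_mapr.
by rewrite !allpairs_map; apply: perm_allpairs.
Qed.

Local Open Scope ring_scope.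

Definition rise (b : bool) : int := if b then 1 else -1.

Lemma endheight_cons b s : endheight (b :: s) = rise b + endheight s.
Proof. by rewrite /endheight /= /rise; case: b; rewrite addrC. Qed.

Lemma hbefore0 s : hbefore s 0 = 0.
Proof. by rewrite /hbefore take0. Qed.

Lemma hbeforeS b s i : hbefore (b :: s) i.+1 = rise b + hbefore s i.
Proof. by rewrite /hbefore /= -endheight_cons. Qed.

Fixpoint hcount (Q : int -> bool -> bool) (h : int) (s : seq bool) : nat :=
  if s is b :: s' then (Q h b + hcount Q (h + rise b) s')%N else 0%N.

Lemma hcountE Q h s :
  count (fun i => Q (h + hbefore s i) (nth false s i)) (iota 0 (size s)) =
  hcount Q h s.
Proof.
elim: s h => //= b s IH h.
rewrite addr0 -(IH (h + rise b)) -[iota 1 _]/(iota (1 + 0) _) iotaDl count_map.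
by congr (_ + _)%N; apply: eq_count => i /=; rewrite hbeforeS addrA.
Qed.

Lemma hcount_cat Q h a c :
  hcount Q h (a ++ c) = (hcount Q h a + hcount Q (h + endheight a) c)%N.
Proof.
elim: a h => [|b a IH] h; first by rewrite /= addr0.
by rewrite endheight_cons cat_cons /= IH addnA addrA.
Qed.

Definition contact_step (h : int) (b : bool) : bool :=
  if b then h + 1 == 0 else h == 1.

Lemma contactsE s : contacts s = hcount contact_step 0 s.
Proof.
rewrite /contacts -hcountE; apply: eq_count => i.
by rewrite /contact_step /stepheight add0r; case: nth.
Qed.

Fixpoint alt_ups (p : bool) (s : seq bool) : nat :=
  if s is b :: s' then ((b && p) + alt_ups (~~ p) s')%N else 0%N.

Lemma odd_abs_add_rise (x : int) b : odd `|(x + rise b)%R|%N = ~~ odd `|x|%N.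
Proof.
have oddE n : odd n = (n %% 2 == 1)%N by rewrite modn2; case: odd.
by rewrite !oddE /rise; case: b; do 2 case: eqP => //=; lia.
Qed.

Lemma hcount_odd_ups h s :
  hcount (fun h b => b && odd `|(h + 1)%R|%N) h s = alt_ups (odd `|(h + 1)%R|%N) s.
Proof.
elim: s h => //= b s IH h; rewrite IH.
by rewrite -addrA (addrC (rise b)) addrA odd_abs_add_rise.
Qed.

Lemma odd_upsE s : odd_ups s = alt_ups true s.
Proof.
rewrite /odd_ups -(hcount_odd_ups 0) -hcountE; apply: eq_count => i.
by rewrite /stepheight add0r; case: nth.
Qed.

Lemma alt_ups_cat p a c :
  alt_ups p (a ++ c) = (alt_ups p a + alt_ups (odd (size a) (+) p) c)%N.
Proof.
by elim: a p => [|b a IH] p //=; rewrite IH addnA addbN addNb.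
Qed.

Local Open Scope nat_scope.

Lemma peaks_cons b s : peaks (b :: s) = (b && ~~ head true s) + peaks s.
Proof.
rewrite /peaks /= -[iota 1 _]/(iota (1 + 0) _) iotaDl count_map.
by case: s.
Qed.

Lemma peaks_cat a c :
  peaks (a ++ c) = peaks a + peaks c + (last false a && ~~ head true c).
Proof.
elim: a => [|b a IH]; first by rewrite andFb addn0.
rewrite cat_cons !peaks_cons IH.
by case: a IH => [|b' a] IH /=; rewrite ?andbF; lia.
Qed.

Fixpoint walk (h t : nat) (s : seq bool) : bool :=
  if s is b :: s' then
    if b then walk h.+1 t s' else (0 < h) && walk h.-1 t s'
  else h == t.

Lemma walk0E h s :
  walk h 0 s = (h%:Z + endheight s == 0)%R &&
               all (fun i => 0 <= h%:Z + hbefore s i)%R (iota 0 (size s).+1).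
Proof.
elim: s h => [|b s IH] h.
  by rewrite /= /hbefore /= addr0 andbT; apply/idP/idP; lia.
rewrite [size _]/= all_iota0S hbefore0 addr0 endheight_cons addrA.
under eq_all => j do rewrite hbeforeS addrA.
case: b; last case: h => [|h]; rewrite [walk _ _ _]/= /rise.
- by rewrite IH (_ : (h%:Z + 1)%R = h.+1%:Z) //=; lia.
- by rewrite add0r all_iota0S hbefore0 addr0 /= andbF.
- by rewrite IH (_ : (h.+1%:Z - 1)%R = h%:Z) //; lia.
Qed.

Lemma dyckE n s : dyck n s = (size s == 2 * n) && walk 0 0 s.
Proof.
rewrite /dyck walk0E add0r; congr [&& _, _ & _].
by apply: eq_all => i; rewrite add0r.
Qed.

Lemma walk_cat h m t a c : walk h m a -> walk m t c -> walk h t (a ++ c).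
Proof.
elim: a h => [|b a IH] h /=; first by move/eqP->.
by case: b => [/IH|/andP[-> /IH]].
Qed.

Lemma walk_shift h t d a : walk h t a -> walk (h + d) (t + d) a.
Proof.
elim: a h => [|b a IH] h /=; first by move/eqP->.
case: b => [/IH//|/andP[h_gt0 /IH]].
by rewrite addn_gt0 h_gt0 -subn1 addnBAC // subn1.
Qed.

Lemma walk_size h t s : walk h t s -> 2 * count id s + h = size s + t.
Proof.
elim: s h => [|b s IH] h /=; first by move/eqP->.
by case: b => [/IH|/andP[h_gt0 /IH]] /=; lia.
Qed.

Lemma walk_endheight h t s : walk h t s -> (h%:Z + endheight s)%R = t.
Proof.
elim: s h => [|b s IH] h /=; first by move/eqP->; rewrite addr0.
by case: b => [/IH|/andP[h_gt0 /IH]]; lia.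
Qed.

Lemma walk_last h a x : walk h 0 a -> a != [::] -> last x a = false.
Proof.
elim: a h x => [|b a IH] h x //= + _.
case: a IH => [|b' a] IH; first by case: b => //=; rewrite andbT.
by case: b => [/IH|/andP[_ /IH]] ->.
Qed.

Lemma walk_first_return s k h : walk (k + h.+1) 0 s ->
  exists a c, [/\ s = a ++ false :: c, walk k 0 a & walk h 0 c].
Proof.
elim: s k => [|b s IH] k /=; first by rewrite addnS.
case: b => [|/andP[_]].
  by rewrite -addSn => /IH [a [c [-> walk_a walk_c]]]; exists (true :: a), c.
case: k => [|k walk_s]; first by exists [::], s.
by have [a [c [-> walk_a walk_c]]] := IH k walk_s; exists (false :: a), c.
Qed.

Lemma walk_first_return_uniq k a a' c c' :
  walk k 0 a -> walk k 0 a' -> a ++ false :: c = a' ++ false :: c' ->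
  a = a' /\ c = c'.
Proof.
elim: a k a' => [|b a IH] k [|b' a'] /=.
- by move=> _ _ [].
- by move=> /eqP-> + [E]; rewrite -E.
- by move=> + /eqP k0 [E]; rewrite E k0.
case: b b' => [] [] walk_a walk_a' // [E].
  by have [-> ->] := IH _ _ walk_a walk_a' E.
case/andP: walk_a walk_a' => _ walk_a /andP[_ walk_a'].
by have [-> ->] := IH _ _ walk_a walk_a' E.
Qed.

Lemma hcount_contact_above k t a (g : int) : walk k t a -> (1 <= g)%R ->
  hcount contact_step (g + k%:Z) a = 0.
Proof.
elim: a k => [|b a IH] k //= + g_ge1.
case: b => [walk_a|/andP[k_gt0 walk_a]]; rewrite /contact_step /rise.
  rewrite (_ : (g + k%:Z + 1 = g + k.+1%:Z)%R); last by lia.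
  by rewrite IH // (_ : (_ == 0)%R = false) //; lia.
rewrite (_ : (g + k%:Z - 1 = g + k.-1%:Z)%R); last by lia.
by rewrite IH // (_ : (_ == 1)%R = false) //; lia.
Qed.

Definition dyck_cons (a c : seq bool) : seq bool := true :: a ++ false :: c.

Lemma contacts_dyck_cons a c :
  walk 0 0 a -> contacts (dyck_cons a c) = (contacts c).+1.
Proof.
move=> walk_a; rewrite !contactsE /dyck_cons /= hcount_cat.
rewrite -[(0 + rise true)%R]/(1 + 0%:Z)%R (hcount_contact_above walk_a) //.
by rewrite -addrA (walk_endheight walk_a).
Qed.

Lemma walk_size_even a : walk 0 0 a -> odd (size a) = false.
Proof. by move/walk_size; rewrite !addn0 => <-; rewrite mul2n odd_double. Qed.

Lemma alt_ups_dyck_cons p a c : walk 0 0 a ->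
  alt_ups p (dyck_cons a c) = p + alt_ups (~~ p) a + alt_ups p c.
Proof.
by move=> walk_a; rewrite /= alt_ups_cat walk_size_even //= addnA; case: p.
Qed.

Lemma peaks_dyck_cons a c : walk 0 0 a ->
  peaks (dyck_cons a c) = (a == [::]) + peaks a + peaks c.
Proof.
rewrite /dyck_cons; case: a => [|b a] walk_a; first by rewrite !peaks_cons.
rewrite peaks_cons peaks_cat (walk_last false walk_a) //.
by case: b walk_a => //= _; rewrite (peaks_cons false) /=; lia.
Qed.

Lemma mem_dyck_paths n s : (s \in dyck_paths n) = dyck n s.
Proof.
apply/mapP/idP => [[t] | dyck_s]; first by rewrite mem_enum inE => ? ->.
have size_s : size s == 2 * n by move: dyck_s; rewrite dyckE => /andP[].
by exists (Tuple size_s); rewrite // mem_enum inE.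
Qed.

Lemma uniq_dyck_paths n : uniq (dyck_paths n).
Proof. by rewrite map_inj_uniq ?enum_uniq //; apply: val_inj. Qed.

Lemma dyck_paths0 : dyck_paths 0 = [:: [::]].
Proof.
apply: perm_small_eq => //; apply: uniq_perm; rewrite ?uniq_dyck_paths // => s.
by rewrite mem_dyck_paths dyckE inE; case: s.
Qed.

Lemma dyck_walk n s : dyck n s -> walk 0 0 s.
Proof. by rewrite dyckE => /andP[]. Qed.

Lemma dyck_dyck_cons i j a c :
  dyck i a -> dyck j c -> dyck (i + j).+1 (dyck_cons a c).
Proof.
rewrite !dyckE => /andP[/eqP size_a walk_a] /andP[/eqP size_c walk_c].
rewrite /= size_cat /= size_a size_c; apply/andP; split; first by apply/eqP; lia.
by apply: (walk_cat (walk_shift 1 walk_a)); rewrite /= walk_c.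
Qed.

Lemma dyck_first_return n s : dyck n.+1 s ->
  exists i a c, [/\ i <= n, dyck i a, dyck (n - i) c & s = dyck_cons a c].
Proof.
rewrite dyckE => /andP[/eqP size_s]; case: s size_s => [|[] s] //= size_s.
move=> /(@walk_first_return _ 0 0) [a [c [s_eq walk_a walk_c]]].
have := walk_size walk_a; have := walk_size walk_c.
move: size_s; rewrite s_eq size_cat /= => size_s size_c size_a.
exists (count id a), a, c; rewrite !dyckE walk_a walk_c !andbT.
by split=> //; apply/eqP; lia.
Qed.

Lemma dyck_cons_inj i j a a' c c' : dyck i a -> dyck j a' ->
  dyck_cons a c = dyck_cons a' c' -> a = a' /\ c = c'.
Proof.
move=> /dyck_walk walk_a /dyck_walk walk_a' [].
exact: walk_first_return_uniq walk_a walk_a'.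
Qed.

Lemma perm_dyck_pathsS n : perm_eq (dyck_paths n.+1)
  (flatten [seq [seq dyck_cons a c | a <- dyck_paths i, c <- dyck_paths (n - i)]
           | i <- iota 0 n.+1]).
Proof.
apply: uniq_perm; first exact: uniq_dyck_paths.
  apply: uniq_flatten_map; first exact: iota_uniq.
    move=> i _; apply: allpairs_uniq; rewrite ?uniq_dyck_paths //.
    move=> [a c] [a' c'] /allpairsP[[? ?] [/= + _ [-> ->]]].
    move=> + /allpairsP[[? ?] [/= + _ [-> ->]]].
    rewrite !mem_dyck_paths => dyck_a dyck_a' /= /(dyck_cons_inj dyck_a dyck_a').
    by case=> -> ->.
  move=> i j _ _ x /allpairsP[[a c] [/= + _ ->]] /allpairsP[[a' c'] [/= + _ E]].
  rewrite !mem_dyck_paths => dyck_a dyck_a'.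
  have [a_eq _] := dyck_cons_inj dyck_a dyck_a' E.
  move: dyck_a dyck_a'; rewrite !dyckE a_eq => /andP[/eqP-> _] /andP[/eqP + _].
  lia.
move=> s; rewrite mem_dyck_paths; apply/idP/flatten_mapP => [dyck_s|].
  have [i [a [c [le_in dyck_a dyck_c ->]]]] := dyck_first_return dyck_s.
  exists i; first by rewrite mem_iota; lia.
  by apply: allpairs_f; rewrite mem_dyck_paths.
move=> [i]; rewrite mem_iota => /andP[_ lt_in] /allpairsP[[a c] [/= + + ->]].
rewrite !mem_dyck_paths => dyck_a dyck_c.
by have := dyck_dyck_cons dyck_a dyck_c; rewrite subnKC //; lia.
Qed.

Lemma perm_map_dyck_pathsS (T : eqType) (F : seq bool -> T) n :
  perm_eq (map F (dyck_paths n.+1))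
    (flatten [seq [seq F (dyck_cons a c) | a <- dyck_paths i, c <- dyck_paths (n - i)]
             | i <- iota 0 n.+1]).
Proof.
rewrite (permPl (perm_map F (perm_dyck_pathsS n))) map_flatten -map_comp.
by under eq_map => i do rewrite /= map_allpairs.
Qed.

Lemma perm_alt_ups_shift n :
  perm_eq [seq (alt_ups false s).+1 | s <- dyck_paths n.+1]
          [seq alt_ups true s | s <- dyck_paths n.+1].
Proof.
rewrite (permPl (perm_map_dyck_pathsS _ n)) (permPr (perm_map_dyck_pathsS _ n)).
apply: perm_flatten_map_subn => i le_in; rewrite subKn //.
have /eq_in_allpairs-> : {in dyck_paths i & dyck_paths (n - i),
    (fun a c => (alt_ups false (dyck_cons a c)).+1) =2
    (fun a c => (alt_ups false c + alt_ups true a).+1)}.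
  move=> a c; rewrite mem_dyck_paths => /dyck_walk walk_a _.
  by rewrite alt_ups_dyck_cons // addnC.
have /eq_in_allpairs-> : {in dyck_paths (n - i) & dyck_paths i,
    (fun a c => alt_ups true (dyck_cons a c)) =2
    (fun a c => (alt_ups false a + alt_ups true c).+1)}.
  move=> a c; rewrite mem_dyck_paths => /dyck_walk walk_a _.
  by rewrite alt_ups_dyck_cons.
exact: perm_allpairsC.
Qed.

Lemma perm_contacts_odd_ups_peaks n :
  perm_eq [seq (contacts s, odd_ups s) | s <- dyck_paths n]
          [seq (contacts s, peaks s) | s <- dyck_paths n].
Proof.
under eq_map do rewrite odd_upsE.
elim/ltn_ind: n => -[|n] IH; first by rewrite dyck_paths0.
have perm_first_factor i : i <= n ->
    perm_eq [seq (alt_ups false a).+1 | a <- dyck_paths i]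
            [seq (a == [::]) + peaks a | a <- dyck_paths i].
  case: i => [_ | i le_in]; first by rewrite dyck_paths0.
  apply: perm_trans (perm_alt_ups_shift i) _.
  have /eq_in_map-> : {in dyck_paths i.+1, (fun a => (a == [::]) + peaks a) =1 peaks}.
    by move=> [|b a]; rewrite mem_dyck_paths // dyckE.
  by have := perm_map snd (IH i.+1 (leq_ltn_trans le_in (ltnSn n))); rewrite -!map_comp.
rewrite (permPl (perm_map_dyck_pathsS _ n)) (permPr (perm_map_dyck_pathsS _ n)).
apply: perm_flatten_map => i; rewrite mem_iota => /andP[_ lt_in].
pose join (u : nat) (v : nat * nat) := (v.1.+1, u + v.2).
have /eq_in_allpairs-> : {in dyck_paths i & dyck_paths (n - i),
    (fun a c => (contacts (dyck_cons a c), alt_ups true (dyck_cons a c))) =2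
    (fun a c => join (alt_ups false a).+1 (contacts c, alt_ups true c))}.
  move=> a c; rewrite mem_dyck_paths => /dyck_walk walk_a _.
  by rewrite contacts_dyck_cons // alt_ups_dyck_cons.
have /eq_in_allpairs-> : {in dyck_paths i & dyck_paths (n - i),
    (fun a c => (contacts (dyck_cons a c), peaks (dyck_cons a c))) =2
    (fun a c => join ((a == [::]) + peaks a) (contacts c, peaks c))}.
  move=> a c; rewrite mem_dyck_paths => /dyck_walk walk_a _.
  by rewrite contacts_dyck_cons // peaks_dyck_cons // /join /= addnA.
apply: perm_allpairs_map; first by apply: perm_first_factor; lia.
by apply: IH; lia.
Qed.

Theorem corollary1 (n m k : nat) :
  count (fun s => (contacts s == m) && (odd_ups s == k)) (dyck_paths n) =
  count (fun s => (contacts s == m) && (peaks s == k)) (dyck_paths n).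
Proof.
have := permP (perm_contacts_odd_ups_peaks n) (pred1 (m, k)).
by rewrite !count_map.
Qed.
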